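(* Let $N$ be even, $f_c$ an integer with $n=2f_c+1\le N$, $r\ge1$ an integer with $f_c\ge128r$, $Q=Q_{\mathrm{flat,1D}}$, and $x\in\mathbb{R}_+^N$ with support in $\mathcal{R}_1(3.74r,r;N,n)$. Let $z\in\mathbb{R}^N$, $s=Qx+z$, and let $\hat x$ be a solution of $\min_{\hat x\in\mathbb{R}^N}\|s-Q\hat x\|_1$ subject to $\hat x\ge0$. Set $h=\hat x-x=(h_0,\dots,h_{N-1})^T$ and $\mathcal{T}=\{l/N: h_l<0\}$. Suppose there exist $q=(q_0,\dots,q_{N-1})^T\in\mathbb{R}^N$ and $0<\rho<1$ such that $Qq=q$, $\|q\|_\infty\le1$, $q_l=0$ whenever $l/N\in\mathcal{T}$, and $q_l>2\rho$ otherwise. Then $$\|\hat x-x\|_1\le\frac{2(1-\rho)}{\rho}\,\|z\|_1.$$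
   Context: $F\in\mathbb{C}^{N\times N}$ is the DFT matrix $[F]_{k,l}=N^{-1/2}e^{-i2\pi kl/N}$, $k\in\{-N/2+1,\dots,N/2\}$, $l\in\{0,\dots,N-1\}$. $Q_{\mathrm{flat,1D}}=F^H\mathrm{diag}(\hat p_{-N/2+1},\dots,\hat p_{N/2})F$ with $\hat p_k=1$ for $|k|\le f_c$ and $0$ otherwise. $\lambda_c=1/f_c$. Entry $x_l$ is identified with the point $l/N$ of $\mathbb{T}=\mathbb{R}/\mathbb{Z}$, and the support of $x$ is the set of such points where $x_l\neq0$. A set $\mathcal{T}\subset\{0,1/N,\dots,1-1/N\}$ belongs to $\mathcal{R}_1(d,r;N,n)$ if it can be partitioned into $r$ pairwise disjoint subsets $\mathcal{T}_1,\dots,\mathcal{T}_r$ such that each interval of $\mathbb{T}$ of length $d\lambda_c/2$ contains at most one point of each $\mathcal{T}_i$. *)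

From HB Require Import structures.
From mathcomp Require Import all_boot all_order all_algebra.
From mathcomp Require Import reals trigo.
From mathcomp Require Import complex.
Set Implicit Arguments. Unset Strict Implicit. Unset Printing Implicit Defensive.
Import Order.TTheory GRing.Theory Num.Theory.
Local Open Scope ring_scope.

Section Defs.
Variable R : realType.
Variable N : nat.

(* frequency index k in {-N/2+1, ..., N/2} attached to row j : 'I_N *)
Definition freq (j : 'I_N) : int := (j : nat)%:Z + 1 - (N %/ 2)%:Z.

Definition dft : 'M[R[i]]_N :=
  \matrix_(j, l)
    let th := 2 * pi * (freq j)%:~R * (l : nat)%:R / N%:R in
    ((Num.sqrt (N%:R : R))^-1)%:C%C * Complex (cos th) (- sin th).

Definition adjmx (A : 'M[R[i]]_N) : 'M[R[i]]_N := map_mx (@conjc R) A^T.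

Definition phat (fc : nat) (j : 'I_N) : R :=
  if (`|freq j| <= fc%:Z)%R then 1 else 0.

Definition Qflat (fc : nat) : 'M[R[i]]_N :=
  adjmx dft *m diag_mx (\row_j ((phat fc j)%:C)%C) *m dft.

Definition realv (v : 'cV[R]_N) : 'cV[R[i]]_N := map_mx (fun a => (a%:C)%C) v.

Definition l1c (v : 'cV[R[i]]_N) : R := \sum_l Normc.normc (v l 0).
Definition l1 (v : 'cV[R]_N) : R := \sum_l `|v l 0|.

Definition pt (l : 'I_N) : R := (l : nat)%:R / N%:R.

(* t lies in the (closed) arc of T starting at a of length L *)
Definition in_arc (a L t : R) : bool :=
  let u := t - a - (Num.floor (t - a))%:~R in (0 <= u) && (u <= L).

Definition supp (v : 'cV[R]_N) : {set 'I_N} := [set l | v l 0 != 0].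

(* T belongs to R_1(d, r; N, n), with lambda_c = 1/fc: T can be partitioned
   into r pairwise disjoint classes (given by a class map c) such that every
   arc of length d*lambda_c/2 contains at most one point of each class. *)
Definition inR1 (fc : nat) (d : R) (r : nat) (T : {set 'I_N}) : Prop :=
  exists c : 'I_N -> 'I_r,
    forall (a : R) (l1 l2 : 'I_N),
      l1 \in T -> l2 \in T -> c l1 = c l2 ->
      in_arc a (d * (fc%:R)^-1 / 2) (pt l1) ->
      in_arc a (d * (fc%:R)^-1 / 2) (pt l2) -> l1 = l2.

End Defs.

From HB Require Import structures.
From mathcomp Require Import all_boot all_order all_algebra.
From mathcomp Require Import reals trigo complex.
From mathcomp Require Import ring lra zify.
Set Implicit Arguments. Unset Strict Implicit. Unset Printing Implicit Defensive.
Import Order.TTheory GRing.Theory Num.Theory.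
Local Open Scope ring_scope.

(* Since Q = F^H diag(p) F is Hermitian, any real v with Qv = v satisfies
   v^T Q h = v^T h.  The constant vector is fixed by Q (the zero frequency
   lies in the band), hence so is v = q/rho - 1.  By the sign pattern of q,
   ||h||_1 <= v^T h, and |v_l| <= (1 - rho)/rho once 2 rho <= 1, which holds
   because the well-separated support cannot exhaust all N points.  Thus
   ||h||_1 <= (1 - rho)/rho ||Qh||_1, and optimality of xhat compared with x
   gives ||Qh||_1 <= ||z||_1 + ||z - Qh||_1 <= 2 ||z||_1. *)

Section ComplexL1.
Variables (R : realType) (N : nat).

Lemma normcR (a : R) : Normc.normc (a%:C)%C = `|a|.
Proof. by rewrite /= expr0n /= addr0 sqrtr_sqr. Qed.

Lemma normc_ge0 (a : R[i]) : 0 <= Normc.normc a.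
Proof. by case: a => a b; rewrite /= sqrtr_ge0. Qed.

Lemma normc_sum (I : finType) (F : I -> R[i]) :
  Normc.normc (\sum_i F i) <= \sum_i Normc.normc (F i).
Proof.
elim/big_rec2: _ => [|i y1 y2 _ IH]; first by rewrite Normc.normc0.
exact: le_trans (le_normcD _ _) (lerD (lexx _) IH).
Qed.

Lemma realvB (a b : 'cV[R]_N) : realv (a - b) = realv a - realv b.
Proof. exact: map_mxB. Qed.

Lemma l1c_realv (v : 'cV[R]_N) : l1c (realv v) = l1 v.
Proof. by apply: eq_bigr => l _; rewrite mxE normcR. Qed.

Lemma l1c_le_subr (u w : 'cV[R[i]]_N) : l1c u <= l1c w + l1c (w - u).
Proof.
rewrite /l1c -big_split; apply: ler_sum => l _.
by rewrite -(normcN ((w - u) l 0)) (le_trans _ (le_normcD _ _)) // !mxE subKr.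
Qed.

Lemma l1c_le_residual (z : 'cV[R]_N) (u : 'cV[R[i]]_N) :
  l1c (realv z - u) <= l1 z -> l1c u <= 2 * l1 z.
Proof.
move=> Hres; apply: le_trans (l1c_le_subr u (realv z)) _.
by rewrite l1c_realv mulr2n mulrDl mul1r lerD2l.
Qed.

End ComplexL1.

Section Hermitian.
Variables (R : realType) (N : nat).

Lemma realv_conj (v : 'cV[R]_N) : map_mx (@conjc R) (realv v) = realv v.
Proof. by apply/matrixP => i j; rewrite !mxE conjc_real. Qed.

Lemma map_conj_mxK m n (A : 'M[R[i]]_(m, n)) :
  map_mx (@conjc R) (map_mx (@conjc R) A) = A.
Proof. by apply/matrixP => i j; rewrite !mxE conjcK. Qed.

Lemma trmx_adj_diag_real (A : 'M[R[i]]_N) (d : 'I_N -> R) :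
  let M := adjmx A *m diag_mx (\row_j ((d j)%:C)%C) *m A in
  M^T = map_mx (@conjc R) M.
Proof.
rewrite /= !map_mxM !trmx_mul /adjmx map_trmx trmxK map_conj_mxK tr_diag_mx.
have -> : map_mx (@conjc R) (diag_mx (\row_j ((d j)%:C)%C)) =
          diag_mx (\row_j ((d j)%:C)%C).
  apply/matrixP => i j; rewrite !mxE.
  by case: (i == j); rewrite /= ?mulr1n ?mulr0n ?conjc_real ?oppr0.
by rewrite mulmxA.
Qed.

Lemma hermitian_fixed_dot (Q : 'M[R[i]]_N) (v h : 'cV[R]_N) :
  Q^T = map_mx (@conjc R) Q -> Q *m realv v = realv v ->
  (realv v)^T *m (Q *m realv h) = (realv v)^T *m realv h.
Proof.
move=> QH Qv; rewrite mulmxA; congr (_ *m _).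
rewrite -[(realv v)^T *m _]trmxK trmx_mul trmxK QH.
by rewrite -realv_conj -map_mxM Qv realv_conj.
Qed.

Lemma realv_dot (v h : 'cV[R]_N) :
  ((realv v)^T *m realv h) 0 0 = ((\sum_l v l 0 * h l 0)%:C)%C.
Proof. by rewrite mxE rmorph_sum; apply: eq_bigr => l _; rewrite !mxE rmorphM. Qed.

Lemma dual_certificate_bound (Q : 'M[R[i]]_N) (v h : 'cV[R]_N) (K : R) :
  Q^T = map_mx (@conjc R) Q -> Q *m realv v = realv v ->
  (forall l, `|v l 0| <= K) ->
  \sum_l v l 0 * h l 0 <= K * l1c (Q *m realv h).
Proof.
move=> QH Qv vK; apply: le_trans (ler_norm _) _.
rewrite -normcR -realv_dot -(hermitian_fixed_dot h QH Qv) mxE.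
apply: le_trans (normc_sum _) _; rewrite /l1c mulr_sumr; apply: ler_sum => l _.
by rewrite !mxE Normc.normcM normcR ler_wpM2r ?normc_ge0.
Qed.

End Hermitian.

Section DFT.
Variable R : realType.

Definition expNi (t : R) : R[i] := Complex (cos t) (- sin t).

Lemma expNiD (a b : R) : expNi (a + b) = expNi a * expNi b.
Proof. by rewrite /expNi cosD sinD /=; congr Complex; ring. Qed.

Lemma expNi0 : expNi 0 = 1.
Proof. by rewrite /expNi cos0 sin0 oppr0. Qed.

Lemma expNiMn (t : R) n : expNi (n%:R * t) = expNi t ^+ n.
Proof.
elim: n => [|n IH]; first by rewrite mul0r expNi0 expr0.
by rewrite -natr1 mulrDl mul1r expNiD IH exprSr.
Qed.

Lemma expNi_2pi_int (k : int) : expNi (2 * pi * k%:~R) = 1.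
Proof.
have expNi_2pi_nat (n : nat) : expNi (2 * pi * n%:R) = 1.
  have -> : 2 * pi * n%:R = 0 + (pi *+ 2) *+ n :> R.
    by rewrite add0r -mulr_natr mulr2n; ring.
  by rewrite /expNi (periodicn (@cosD2pi R)) (periodicn (@sinD2pi R)) -/(expNi 0) expNi0.
case: k => n; first exact: expNi_2pi_nat.
rewrite NegzE mulrN /expNi cosN sinN opprK.
by have [-> /eqP] := expNi_2pi_nat n.+1; rewrite oppr_eq0 => /eqP ->.
Qed.

Lemma expNi_neq1 (t : R) : 0 < `|t| <= pi -> expNi t != 1.
Proof.
move=> /andP[t0 tpi]; apply/negP => /eqP [cos_t _].
have : cos `|t| < cos 0 by rewrite ltr_cos // in_itv /= ?lexx ?pi_ge0 ?normr_ge0.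
by rewrite cos_norm cos_t cos0 ltxx.
Qed.

Lemma sum_unity_root_eq0 (w : R[i]) n :
  w ^+ n = 1 -> w != 1 -> \sum_(i < n) w ^+ i = 0.
Proof.
move=> wn w1; have := subrX1 w n; rewrite wn subrr => /esym/eqP.
by rewrite mulf_eq0 subr_eq0 (negbTE w1) => /eqP.
Qed.

Lemma freq_bound N (j : 'I_N) : ~~ odd N -> (2 * `|freq j| <= N%:Z)%R.
Proof.
move: (ltn_ord j); rewrite /freq; move: (nat_of_ord j) => m.
have := divn_eq N 2; have := ltn_pmod N (isT : (0 < 2)%N); rewrite modn2; lia.
Qed.

Lemma dft_row_sum N (j : 'I_N) : ~~ odd N ->
  \sum_l dft R N j l =
    if freq j == 0 then (((Num.sqrt (N%:R : R))^-1)%:C)%C * N%:R else 0.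
Proof.
move=> Nev; have N0 : (0 < N)%N by case: N j {Nev} => [[]|].
have Npos : (0 : R) < N%:R by rewrite ltr0n.
set c := (((Num.sqrt (N%:R : R))^-1)%:C)%C.
set th := 2 * pi * (freq j)%:~R / (N%:R : R).
have dftE (l : 'I_N) : dft R N j l = c * expNi th ^+ l.
  by rewrite mxE -expNiMn /expNi /th; congr (_ * Complex (cos _) (- sin _)); ring.
rewrite (eq_bigr _ (fun l _ => dftE l)) -mulr_sumr.
case: eqP => [k0|k0].
  rewrite /th k0 mulr0 mul0r expNi0.
  by under eq_bigr do rewrite expr1n; rewrite sumr_const card_ord.
rewrite sum_unity_root_eq0 ?mulr0 //.
  rewrite -expNiMn /th.
  have -> : N%:R * (2 * pi * (freq j)%:~R / N%:R) = 2 * pi * (freq j)%:~R :> R.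
    by field; rewrite gt_eqF.
  exact: expNi_2pi_int.
apply: expNi_neq1.
have -> : `|th| = 2 * pi * (`|freq j|)%:~R / N%:R.
  rewrite /th !normrM normfV intr_norm (ger0_norm (ltW Npos)).
  by rewrite (ger0_norm (@pi_ge0 R)) (@ger0_norm _ 2).
have kpos : (0 < `|freq j|)%R by rewrite normr_gt0; apply/eqP.
have : ((2 * `|freq j|)%:~R <= (N%:Z)%:~R :> R) by rewrite ler_int freq_bound.
rewrite intrM => kle.
apply/andP; split.
  by rewrite divr_gt0 // !mulr_gt0 ?pi_gt0 ?ltr0z.
rewrite ler_pdivrMr // -mulrA mulrCA ler_pM2l ?pi_gt0 // mulrA.
Qed.

Lemma Qflat_const1 N fc : ~~ odd N -> (0 < N)%N ->
  Qflat R N fc *m (const_mx 1 : 'cV[R[i]]_N) = const_mx 1.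
Proof.
move=> Nev N0.
set c := (((Num.sqrt (N%:R : R))^-1)%:C)%C.
have j0P : (N %/ 2 - 1 < N)%N by lia.
pose j0 : 'I_N := Ordinal j0P.
have freq_j0 : freq j0 = 0 by rewrite /freq /=; lia.
have freq0 (j : 'I_N) : freq j = 0 -> j = j0.
  by rewrite /freq => fj; apply: val_inj => /=; lia.
have dft1 j k : (dft R N *m (const_mx 1 : 'cV[R[i]]_N)) j k =
                if freq j == 0 then c * N%:R else 0.
  rewrite mxE -(dft_row_sum j Nev).
  by apply: eq_bigr => l _; rewrite [const_mx _ _ _]mxE mulr1.
rewrite /Qflat -!mulmxA mul_diag_mx.
apply/matrixP => m k; rewrite [LHS]mxE (bigD1 j0) //= big1; last first.
  move=> j /eqP jj0; rewrite [X in _ * X]mxE dft1.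
  by case: eqP => [/freq0 //|_]; rewrite !mulr0.
rewrite addr0 [X in _ * X]mxE dft1 freq_j0 eqxx mxE /phat freq_j0 normr0.
rewrite lez_nat leq0n !mxE freq_j0 mulr0 !mul0r /= cos0 sin0 oppr0.
rewrite /c /= mulr1 !mul0r subr0 mulr0 addr0 oppr0.
have -> : (N%:R : R[i]) = ((N%:R : R)%:C)%C by rewrite rmorph_nat.
rewrite -[((_ +i* 0)%C)]/(((Num.sqrt (N%:R : R))^-1)%:C)%C -!rmorphM /=.
congr (_%:C)%C.
have sqrtN2 : Num.sqrt (N%:R : R) ^+ 2 = N%:R by rewrite sqr_sqrtr ?ler0n.
by rewrite mul1r mulrA -expr2 exprVn sqrtN2 mulVf // pnatr_eq0 -lt0n.
Qed.

End DFT.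

Section Certificate.
Variables (R : realType) (N : nat) (q h : 'cV[R]_N) (rho : R).
Hypothesis rho_gt0 : 0 < rho.
Hypothesis q_off : forall l, h l 0 < 0 -> q l 0 = 0.
Hypothesis q_on : forall l, ~~ (h l 0 < 0) -> 2 * rho < q l 0.

Definition cert : 'cV[R]_N := \col_l (q l 0 / rho - 1).

Lemma realv_cert : realv cert = ((rho^-1)%:C)%C *: realv q - const_mx 1.
Proof.
apply/matrixP => i j; rewrite !mxE (ord1 j) /= rmorphB rmorphM /= mulrC.
by rewrite rmorph1.
Qed.

Lemma l1_le_cert_dot : l1 h <= \sum_l cert l 0 * h l 0.
Proof.
apply: ler_sum => l _; rewrite mxE.
have [h_neg|h_ge0] := ltP (h l 0) 0.
  by rewrite q_off // mul0r sub0r mulN1r ltr0_norm.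
have q_big : 2 * rho < q l 0 by apply: q_on; rewrite -leNgt.
rewrite ger0_norm // ler_peMl // lerBrDr ler_pdivlMr //; lra.
Qed.

Lemma cert_bound : 2 * rho <= 1 -> (forall l, `|q l 0| <= 1) ->
  forall l, `|cert l 0| <= (1 - rho) / rho.
Proof.
move=> rho_half q_le1 l; rewrite mxE.
have [h_neg|h_ge0] := ltP (h l 0) 0.
  by rewrite q_off // mul0r sub0r normrN1 ler_pdivlMr // mul1r; lra.
have q_big : 2 * rho < q l 0 by apply: q_on; rewrite -leNgt.
have q1 : q l 0 <= 1 by exact: le_trans (ler_norm _) (q_le1 l).
have -> : q l 0 / rho - 1 = (q l 0 - rho) / rho by field; rewrite gt_eqF.
have q_rho : 0 <= q l 0 - rho by move: rho_gt0; lra.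
rewrite ger0_norm ?divr_ge0 ?(ltW rho_gt0) //.
by rewrite ler_wpM2r ?invr_ge0 ?(ltW rho_gt0) // lerD2r.
Qed.

End Certificate.

Lemma inR1_not_full (R : realType) (N fc r : nat) (d : R) (T : {set 'I_N}) :
  (r < N)%N -> (0 < fc)%N -> (2 * fc <= N)%N -> r%:R <= d ->
  inR1 fc d r T -> exists l, l \notin T.
Proof.
move=> rN fc0 fcN rd [c Hc].
case: (pickP (fun l => l \notin T)) => [l lT | allT]; first by exists l.
exfalso.
have gP (i : 'I_r.+1) : (i < N)%N by have := ltn_ord i; lia.
pose g (i : 'I_r.+1) : 'I_N := Ordinal (gP i).
have fcR : (0 : R) < fc%:R by rewrite ltr0n.
have NR : (0 : R) < N%:R by rewrite ltr0n; lia.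
(* The r + 1 points 0, 1/N, ..., r/N lie in the arc [0, d/(2 fc)],
   since r/N <= r/(2 fc); so two of them share a class. *)
have arc (i : 'I_r.+1) : in_arc 0 (d * (fc%:R)^-1 / 2) (pt R (g i)).
  rewrite /in_arc /pt /= !subr0.
  have t0 : 0 <= (i%:R : R) / N%:R by rewrite divr_ge0 // ler0n.
  have t1 : (i%:R : R) / N%:R < 1 by rewrite ltr_pdivrMr // mul1r ltr_nat.
  rewrite (@floor_def _ _ 0) ?subr0 ?add0r ?mulr1z ?t0 ?t1 //=.
  apply: (@le_trans _ _ (r%:R * (fc%:R)^-1 / 2)); last first.
    by rewrite !ler_wpM2r ?invr_ge0 ?ler0n.
  rewrite -mulrA -invfM ler_pdivlMr ?mulr_gt0 // mulrAC ler_pdivrMr //.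
  rewrite -!natrM ler_nat; apply: leq_mul; last lia.
  by rewrite -ltnS.
have inj : injective (fun i => c (g i)).
  move=> i j cij; apply: val_inj.
  have := Hc 0 (g i) (g j); rewrite (negbFE (allT _)) (negbFE (allT _)).
  by move=> /(_ isT isT cij (arc i) (arc j)) /(congr1 val).
by have := leq_card _ inj; rewrite !card_ord; lia.
Qed.

Theorem lemma1 (R : realType) (N fc r : nat) (x z xhat q : 'cV[R]_N) (rho : R) :
  ~~ odd N -> (2 * fc + 1 <= N)%N -> (1 <= r)%N -> (128 * r <= fc)%N ->
  (forall l, 0 <= x l 0) ->
  @inR1 R N fc (374%:R / 100%:R * r%:R) r (supp x) ->
  let Q := Qflat R N fc in
  let s := Q *m realv x + realv z in
  (forall l, 0 <= xhat l 0) ->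
  (forall y : 'cV[R]_N, (forall l, 0 <= y l 0) ->
     l1c (s - Q *m realv xhat) <= l1c (s - Q *m realv y)) ->
  let h := xhat - x in
  0 < rho < 1 ->
  Q *m realv q = realv q ->
  (forall l, `|q l 0| <= 1) ->
  (forall l, h l 0 < 0 -> q l 0 = 0) ->
  (forall l, ~~ (h l 0 < 0) -> 2 * rho < q l 0) ->
  l1 (xhat - x) <= 2 * (1 - rho) / rho * l1 z.
Proof.
move=> Nev HN r1 Hfc x0 HR Q s xh0 Hopt h /andP[rho0 _] Qq q_le1 q_off q_on.
have rR : r%:R <= 374%:R / 100%:R * r%:R :> R.
  by rewrite ler_peMl ?ler0n // ler_pdivlMr ?ltr0n // mul1r ler_nat.
have [l0] : exists l, l \notin supp x by apply: (inR1_not_full _ _ _ rR HR); lia.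
rewrite inE negbK => /eqP x_l0.
have rho_half : 2 * rho <= 1.
  have h_l0 : ~~ (h l0 0 < 0) by rewrite !mxE x_l0 subr0 -leNgt.
  exact: le_trans (ltW (q_on l0 h_l0)) (le_trans (ler_norm _) (q_le1 l0)).
have Qcert : Q *m realv (cert q rho) = realv (cert q rho).
  by rewrite realv_cert mulmxBr -scalemxAr Qq /Q Qflat_const1 //; lia.
have residual : l1c (realv z - Q *m realv h) <= l1 z.
  rewrite -l1c_realv /h realvB mulmxBr opprB addrA.
  by have := Hopt x x0; rewrite /s (addrC (Q *m _)) addrK.
apply: le_trans (l1_le_cert_dot rho0 q_off q_on) _.
apply: le_trans (dual_certificate_bound _ (trmx_adj_diag_real _ _) Qcert
                   (cert_bound rho0 q_off q_on rho_half q_le1)) _.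
have -> : 2 * (1 - rho) / rho * l1 z = (1 - rho) / rho * (2 * l1 z) by ring.
rewrite ler_wpM2l ?l1c_le_residual //.
by rewrite divr_ge0 //; lra.
Qed.
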